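(* Assume $\mathbf a,\mathbf b\in\Delta^n$ with strictly positive entries, let $\eta>0$, let $X^\eta$ be the unique minimizer of $g_\eta$ over $\mathbb{R}^{n\times n}_+$, and set $\gamma=\|C\|_\infty+2\eta$. Then $$\|X^\eta\mathbf 1_n-\mathbf a\|_1\le\frac{n\gamma}{\tau},\qquad \|(X^\eta)^\top\mathbf 1_n-\mathbf b\|_1\le\frac{n\gamma}{\tau}.$$
   Context: Let $n\ge1$, $C\in\mathbb{R}^{n\times n}$ with nonnegative entries and $\|C\|_\infty=\max_{i,j}|C_{ij}|$; $\tau>0$; $\Delta^n=\{\mathbf x\in\mathbb{R}^n_+:\sum_i x_i=1\}$. For $\mathbf x\in\mathbb{R}^n_+$ and $\mathbf y$ with positive entries, $\mathbf{KL}(\mathbf x\|\mathbf y)=\sum_i x_i\log(x_i/y_i)-x_i+y_i$ (with $0\log0=0$). $\|X\|_2$ is the Frobenius norm, $\mathbf 1_n$ the all-ones vector. $g_\eta(X)=\langle C,X\rangle+\eta\|X\|_2^2+\tau\mathbf{KL}(X\mathbf 1_n\|\mathbf a)+\tau\mathbf{KL}(X^\top\mathbf 1_n\|\mathbf b)$ for $X\in\mathbb{R}^{n\times n}_+$. *)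

From HB Require Import structures.
From mathcomp Require Import all_boot all_order all_algebra.
From mathcomp Require Import all_classical all_reals all_analysis.
Set Implicit Arguments. Unset Strict Implicit. Unset Printing Implicit Defensive.
Import Order.TTheory GRing.Theory Num.Theory.
Local Open Scope ring_scope.

Section Defs.
Variable R : realType.

(* generalized KL divergence; at x_i = 0 the term x_i * ln(x_i/y_i) is 0 *)
Definition KL (n : nat) (x y : 'cV[R]_n) : R :=
  \sum_(i < n) (x i 0 * ln (x i 0 / y i 0) - x i 0 + y i 0).

Definition nonneg_mx (m n : nat) (X : 'M[R]_(m, n)) : Prop :=
  forall i j, 0 <= X i j.

Definition pos_vec (n : nat) (x : 'cV[R]_n) : Prop := forall i, 0 < x i 0.

Definition in_simplex (n : nat) (x : 'cV[R]_n) : Prop :=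
  (forall i, 0 <= x i 0) /\ \sum_(i < n) x i 0 = 1.

Definition mx_norm_inf (n : nat) (C : 'M[R]_n) : R :=
  \big[Num.max/0]_(i < n) \big[Num.max/0]_(j < n) `|C i j|.

Definition frob_sq (n : nat) (X : 'M[R]_n) : R :=
  \sum_(i < n) \sum_(j < n) X i j ^+ 2.

Definition frob_inner (n : nat) (C X : 'M[R]_n) : R :=
  \sum_(i < n) \sum_(j < n) C i j * X i j.

Definition l1 (n : nat) (v : 'cV[R]_n) : R := \sum_(i < n) `|v i 0|.

Definition ones (n : nat) : 'cV[R]_n := const_mx 1.

Definition g_eta (n : nat) (C : 'M[R]_n) (tau eta : R) (a b : 'cV[R]_n)
  (X : 'M[R]_n) : R :=
  frob_inner C X + eta * frob_sq X + tau * KL (X *m ones n) a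
  + tau * KL (X^T *m ones n) b.

Definition is_minimizer_g (n : nat) (C : 'M[R]_n) (tau eta : R)
  (a b : 'cV[R]_n) (X : 'M[R]_n) : Prop :=
  nonneg_mx X /\ forall Y : 'M[R]_n, nonneg_mx Y ->
    g_eta C tau eta a b X <= g_eta C tau eta a b Y.

End Defs.
Arguments ones {R n}.

From HB Require Import structures.
From mathcomp Require Import all_boot all_order all_algebra.
From mathcomp Require Import all_classical all_reals all_analysis.
From mathcomp Require Import lra ring.
Set Implicit Arguments.
Unset Strict Implicit.
Unset Printing Implicit Defensive.
Import Order.TTheory GRing.Theory Num.Theory.
Local Open Scope ring_scope.

(* Write r, c for the row and column sums of the minimizer X, u i = ln (r i / a i)
   and v j = ln (c j / b j).  Moving one entry X i j by +s or -s and letting s -> 0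
   gives the first-order conditions -gamma <= tau (u i + v j) for all i, j, and
   u i + v j <= 0 whenever X i j > 0; the blow-up of ln at 0 forces every r i and
   c j to be positive, and comparing X with t X for t < 1 gives sum r <= 1, hence
   X i j <= 1.  As sum r <= 1 = sum a, some u i' is <= 0, and likewise some v j';
   chaining the two conditions through such indices gives |u i| <= gamma / tau.
   Since ln has slope at least 1 on (0, 1], |r i - a i| <= |u i|, and summing gives
   the row bound.  The column bound is the row bound of the transposed problem. *)

Section RealBounds.
Context {R : realType}.
Implicit Types a r s t x y z K M : R.

Lemma ln_le_subr1 x : 0 < x -> ln x <= x - 1.
Proof. by move=> x0; have := @le_ln1Dx R (x - 1); rewrite addrCA subrr addr0; apply; lra. Qed.

Lemma subr1V_le_ln x : 0 < x -> 1 - x^-1 <= ln x.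
Proof.
move=> x0; have xV0 : 0 < x^-1 by rewrite invr_gt0.
by have := ln_le_subr1 xV0; rewrite lnV ?posrE //; lra.
Qed.

Lemma ln_divDl_le r s a : 0 < r -> 0 < s -> 0 < a ->
  ln ((r + s) / a) <= ln (r / a) + s / r.
Proof.
move=> r0 s0 a0; have rs0 : 0 < r + s by lra.
have := ln_le_subr1 (divr_gt0 rs0 r0).
rewrite !ln_div ?posrE // mulrDl divff ?gt_eqF //; lra.
Qed.

Lemma ln_divBl_ge r s a : 0 < s -> s <= r / 2 -> 0 < a ->
  ln (r / a) - 2 * s / r <= ln ((r - s) / a).
Proof.
move=> s0 sr a0; have r0 : 0 < r by lra.
have rs0 : 0 < r - s by lra.
have := ln_le_subr1 (divr_gt0 r0 rs0); rewrite !ln_div ?posrE //.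
suff : r / (r - s) - 1 <= 2 * s / r by lra.
rewrite lerBlDr ler_pdivrMr // -subr_ge0.
have -> : (2 * s / r + 1) * (r - s) - r = s / r * (r - 2 * s) by field; rewrite gt_eqF.
apply: mulr_ge0; [exact/ltW/divr_gt0 | lra].
Qed.

(* [ln] has slope at least 1 on (0, 1], so it separates points there at least as
   much as the identity does. *)
Lemma abs_subr_le_abs_ln_div a r : 0 < a -> a <= 1 -> 0 < r -> r <= 1 ->
  `|r - a| <= `|ln (r / a)|.
Proof.
move=> a0 a1 r0 r1; rewrite ln_div ?posrE //.
have := subr1V_le_ln (divr_gt0 r0 a0); have := subr1V_le_ln (divr_gt0 a0 r0).
rewrite !ln_div ?posrE // !invf_div => hra har.
have ear : a / r * r = a by rewrite mulfVK ?gt_eqF.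
have era : r / a * a = r by rewrite mulfVK ?gt_eqF.
case: (lerP a r) => ar.
- rewrite !ger0_norm ?subr_ge0 ?ler_ln ?posrE //; nra.
- rewrite !ltr0_norm ?subr_lt0 ?ltr_ln ?posrE //; nra.
Qed.

Lemma exists_ln_div_lt a M : 0 < a -> exists2 s, 0 < s <= 1 & ln (s / a) < M.
Proof.
move=> a0; exists (Num.min 1 (a * expR (M - 1))).
  by rewrite lt_min ltr01 mulr_gt0 ?expR_gt0 //= ge_min lexx.
have s0 : 0 < Num.min 1 (a * expR (M - 1)) by rewrite lt_min ltr01 mulr_gt0 ?expR_gt0.
apply: (le_lt_trans (y := M - 1)); last lra.
rewrite -[X in _ <= X]expRK ler_ln ?posrE ?divr_gt0 ?expR_gt0 //.
by rewrite ler_pdivrMr // [_ * a]mulrC ge_min lexx orbT.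
Qed.

Lemma gt0_of_lnD_lbound K t a b x y : 0 < t -> 0 < a -> 0 < b -> 0 <= x -> 0 <= y ->
  (forall s, 0 < s -> s <= 1 -> 0 <= K + t * ln ((x + s) / a) + t * ln ((y + s) / b)) ->
  0 < x.
Proof.
move=> t0 a0 b0; rewrite le_eqVlt => /predU1P [<-|//] y0 hK.
have [s /andP [s0 s1]] := exists_ln_div_lt ((- K - t * ln ((y + 1) / b)) / t) a0.
rewrite ltr_pdivlMr // => hs; have := hK s s0 s1; rewrite add0r.
have : ln ((y + s) / b) <= ln ((y + 1) / b).
  by rewrite ler_ln ?posrE ?divr_gt0 ?ler_pM2r ?invr_gt0 ?lerD2l //; lra.
move=> /(ler_wpM2l (ltW t0)); nra.
Qed.

Lemma le0_of_small_bound z K d : 0 < d ->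
  (forall s, 0 < s -> s <= d -> z <= K * s) -> z <= 0.
Proof.
move=> d0 hz; apply/ler_addgt0Pr => e e0; rewrite add0r.
have K1 : 0 < `|K| + 1 by rewrite ltr_pwDr.
pose s := Num.min d (e / (`|K| + 1)).
have s0 : 0 < s by rewrite lt_min d0 divr_gt0.
have se : s <= e / (`|K| + 1) by rewrite ge_min lexx orbT.
apply: (le_trans (hz s s0 _)); first by rewrite ge_min lexx.
apply: (le_trans (y := (`|K| + 1) * s)); first by have := ler_norm K; nra.
by rewrite mulrC -ler_pdivlMr.
Qed.

Definition kl_term x a := x * ln (x / a) - x + a.

Lemma kl_term_subr_le a x y : 0 < a -> 0 <= x -> 0 < y ->
  kl_term y a - kl_term x a <= (y - x) * ln (y / a).
Proof.
rewrite /kl_term => a0; rewrite le_eqVlt => /predU1P [<- y0|x0 y0].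
  by rewrite !mul0r; lra.
have := ln_le_subr1 (divr_gt0 y0 x0); rewrite !ln_div ?posrE // => h.
have : x * (ln y - ln x) <= x * (y / x - 1) by rewrite ler_pM2l.
rewrite [x * (y / x - 1)]mulrBr mulr1 mulrCA divff ?gt_eqF // mulr1; nra.
Qed.

Lemma kl_term_scale_le a r t : 0 < a -> 0 < t -> t < 1 -> 0 <= r ->
  kl_term (t * r) a - kl_term r a <= (t - 1) * (r - a / t).
Proof.
move=> a0 t0 t1; rewrite le_eqVlt => /predU1P [<-|r0].
  by rewrite mulr0 subrr sub0r mulrN -mulNr mulr_ge0 ?divr_ge0 //; lra.
apply: (le_trans (kl_term_subr_le a0 (ltW r0) (mulr_gt0 t0 r0))).
rewrite -{2}[r]mul1r -mulrBl -mulrA ler_wnM2l //; first lra.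
have trar : 0 < t * r / a by rewrite divr_gt0 ?mulr_gt0.
have := subr1V_le_ln trar; rewrite invf_div => h.
have : r * (1 - a / (t * r)) <= r * ln (t * r / a) by rewrite ler_pM2l.
suff -> : r * (1 - a / (t * r)) = r - a / t by [].
by field; rewrite !gt_eqF.
Qed.

End RealBounds.

Definition row_sum (V : nmodType) m n (X : 'M[V]_(m, n)) (i : 'I_m) := \sum_(j < n) X i j.
Definition col_sum (V : nmodType) m n (X : 'M[V]_(m, n)) (j : 'I_n) := \sum_(i < m) X i j.

Section Marginals.
Context {R : realType} {n : nat}.
Implicit Types (C X Y : 'M[R]_n) (a b : 'cV[R]_n).

Lemma mul_ones_mxE X i : (X *m ones) i 0 = row_sum X i.
Proof. by rewrite mxE; apply: eq_bigr => j _; rewrite mxE mulr1. Qed.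

Lemma tr_mul_ones_mxE X j : (X^T *m ones) j 0 = col_sum X j.
Proof. by rewrite mul_ones_mxE; apply: eq_bigr => i _; rewrite mxE. Qed.

Lemma sum_row_sum X : \sum_i row_sum X i = \sum_j col_sum X j.
Proof. exact: exchange_big. Qed.

Lemma row_sum_ge0 X i : nonneg_mx X -> 0 <= row_sum X i.
Proof. by move=> X0; apply: sumr_ge0 => j _; apply: X0. Qed.

Lemma col_sum_ge0 X j : nonneg_mx X -> 0 <= col_sum X j.
Proof. by move=> X0; apply: sumr_ge0 => i _; apply: X0. Qed.

Lemma ler_sum_term (F : 'I_n -> R) i : (forall k, 0 <= F k) -> F i <= \sum_k F k.
Proof. by move=> F0; rewrite (bigD1 i) //= lerDl sumr_ge0. Qed.

Lemma entry_le_row_sum X i j : nonneg_mx X -> X i j <= row_sum X i.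
Proof. by move=> X0; apply: (ler_sum_term (F := fun l => X i l)) => l; apply: X0. Qed.

Lemma entry_le_col_sum X i j : nonneg_mx X -> X i j <= col_sum X j.
Proof. by move=> X0; apply: (ler_sum_term (F := fun k => X k j)) => k; apply: X0. Qed.

Lemma g_etaE C tau eta a b X : g_eta C tau eta a b X =
  frob_inner C X + eta * frob_sq X + tau * \sum_i kl_term (row_sum X i) (a i 0)
  + tau * \sum_j kl_term (col_sum X j) (b j 0).
Proof.
by rewrite /g_eta /KL; congr (_ + _ * _ + _ * _); apply: eq_bigr => i _;
  rewrite ?tr_mul_ones_mxE ?mul_ones_mxE.
Qed.

Lemma g_eta_tr C tau eta a b X : g_eta C^T tau eta b a X^T = g_eta C tau eta a b X.
Proof.
rewrite /g_eta trmxK addrAC; congr (_ + _ * _ + _); first congr (_ + _ * _).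
- by rewrite /frob_inner exchange_big; apply: eq_bigr => i _; apply: eq_bigr => j _; rewrite !mxE.
- by rewrite /frob_sq exchange_big; apply: eq_bigr => i _; apply: eq_bigr => j _; rewrite !mxE.
Qed.

Lemma is_minimizer_g_tr C tau eta a b X :
  is_minimizer_g C tau eta a b X -> is_minimizer_g C^T tau eta b a X^T.
Proof.
case=> X0 Xmin; split=> [i j|Y Y0]; first by rewrite mxE.
rewrite -[Y]trmxK !g_eta_tr; apply: Xmin => i j; rewrite mxE; exact: Y0.
Qed.

Lemma sumrB_agree_off (F G : 'I_n -> R) i :
  (forall k, k != i -> F k = G k) -> \sum_k F k - \sum_k G k = F i - G i.
Proof.
move=> FG; rewrite (bigD1 i) // [\sum_k G k](bigD1 i) //= (eq_bigr G) => [|k /FG //].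
by rewrite opprD addrACA subrr addr0.
Qed.

Lemma sumrB_agree_off2 (F G : 'I_n -> 'I_n -> R) i j :
  (forall k l, (k != i) || (l != j) -> F k l = G k l) ->
  \sum_k \sum_l F k l - \sum_k \sum_l G k l = F i j - G i j.
Proof.
move=> FG; rewrite (sumrB_agree_off (i := i)) => [|k ki]; last first.
  by apply: eq_bigr => l _; rewrite FG ?ki.
by apply: sumrB_agree_off => l lj; rewrite FG // lj orbT.
Qed.

Lemma g_eta_subr_entry C tau eta a b X Y i j :
  (forall k l, (k != i) || (l != j) -> Y k l = X k l) ->
  g_eta C tau eta a b Y - g_eta C tau eta a b X =
    C i j * (Y i j - X i j) + eta * (Y i j ^+ 2 - X i j ^+ 2)
    + tau * (kl_term (row_sum Y i) (a i 0) - kl_term (row_sum X i) (a i 0))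
    + tau * (kl_term (col_sum Y j) (b j 0) - kl_term (col_sum X j) (b j 0)).
Proof.
move=> YX; rewrite !g_etaE.
have inner : frob_inner C Y - frob_inner C X = C i j * (Y i j - X i j).
  by rewrite /frob_inner (sumrB_agree_off2 (i := i) (j := j)) ?mulrBr // => k l /YX ->.
have sq : frob_sq Y - frob_sq X = Y i j ^+ 2 - X i j ^+ 2.
  by rewrite /frob_sq (sumrB_agree_off2 (i := i) (j := j)) // => k l /YX ->.
have rows : \sum_k kl_term (row_sum Y k) (a k 0) - \sum_k kl_term (row_sum X k) (a k 0)
    = kl_term (row_sum Y i) (a i 0) - kl_term (row_sum X i) (a i 0).
  rewrite (sumrB_agree_off (i := i)) // => k ki.
  by congr kl_term; apply: eq_bigr => l _; rewrite YX ?ki.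
have cols : \sum_l kl_term (col_sum Y l) (b l 0) - \sum_l kl_term (col_sum X l) (b l 0)
    = kl_term (col_sum Y j) (b j 0) - kl_term (col_sum X j) (b j 0).
  rewrite (sumrB_agree_off (i := j)) // => l lj.
  by congr kl_term; apply: eq_bigr => k _; rewrite YX // lj orbT.
rewrite -inner -sq -rows -cols; ring.
Qed.

Lemma exists_ler_of_sum (F G : 'I_n -> R) : (0 < n)%N ->
  \sum_k F k <= \sum_k G k -> exists i, F i <= G i.
Proof.
move=> n0; apply: contraPP => /forallNP FG; apply/negP; rewrite -ltNge.
apply: ltr_sum => [|i _]; first by apply/hasP; exists (Ordinal n0); rewrite ?mem_index_enum.
by rewrite ltNge; apply/negP.
Qed.

Lemma exists_gt0_of_sum (F : 'I_n -> R) : 0 < \sum_k F k -> exists i, 0 < F i.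
Proof.
apply: contraPP => /forallNP F0; apply/negP; rewrite -leNgt.
by apply: sumr_le0 => i _; rewrite leNgt; apply/negP.
Qed.

Lemma ler_mx_norm_inf C i j : C i j <= mx_norm_inf C.
Proof.
apply: le_trans (ler_norm _) _.
apply: le_trans (le_bigmax 0 (fun i => \big[Num.max/0]_(j < n) `|C i j|) i).
exact: (le_bigmax 0 (fun j => `|C i j|) j).
Qed.

Lemma sum_kl_term_scale_le (r a : 'I_n -> R) t : 0 < t -> t < 1 ->
  (forall k, 0 < a k) -> \sum_k a k = 1 -> (forall k, 0 <= r k) ->
  \sum_k (kl_term (t * r k) (a k) - kl_term (r k) (a k)) <= (t - 1) * (\sum_k r k - t^-1).
Proof.
move=> t0 t1 a0 a1 r0.
have -> : t^-1 = \sum_k a k / t by rewrite -mulr_suml a1 mul1r.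
rewrite -sumrB mulr_sumr.
by apply: ler_sum => k _; apply: kl_term_scale_le.
Qed.

Lemma g_eta_scale_le C tau eta a b X t : 0 < tau -> 0 < t -> t < 1 ->
  pos_vec a -> pos_vec b -> in_simplex a -> in_simplex b -> nonneg_mx X ->
  g_eta C tau eta a b (t *: X) - g_eta C tau eta a b X <=
  (t - 1) * (frob_inner C X + eta * (t + 1) * frob_sq X
             + 2 * tau * (\sum_i row_sum X i - t^-1)).
Proof.
move=> tau0 t0 t1 a0 b0 [_ a1] [_ b1] X0; rewrite !g_etaE.
have innerZ : frob_inner C (t *: X) = t * frob_inner C X.
  by rewrite /frob_inner mulr_sumr; apply: eq_bigr => i _; rewrite mulr_sumr;
    apply: eq_bigr => j _; rewrite mxE mulrCA.
have sqZ : frob_sq (t *: X) = t ^+ 2 * frob_sq X.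
  by rewrite /frob_sq mulr_sumr; apply: eq_bigr => i _; rewrite mulr_sumr;
    apply: eq_bigr => j _; rewrite mxE exprMn.
have rowsZ : \sum_i kl_term (row_sum (t *: X) i) (a i 0)
    = \sum_i kl_term (t * row_sum X i) (a i 0).
  by apply: eq_bigr => i _; rewrite /row_sum mulr_sumr; congr kl_term;
    apply: eq_bigr => j _; rewrite mxE.
have colsZ : \sum_j kl_term (col_sum (t *: X) j) (b j 0)
    = \sum_j kl_term (t * col_sum X j) (b j 0).
  by apply: eq_bigr => j _; rewrite /col_sum mulr_sumr; congr kl_term;
    apply: eq_bigr => i _; rewrite mxE.
have rows := sum_kl_term_scale_le t0 t1 (fun i => a0 i) a1 (fun i => row_sum_ge0 i X0).
have cols := sum_kl_term_scale_le t0 t1 (fun j => b0 j) b1 (fun j => col_sum_ge0 j X0).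
rewrite -sum_row_sum sumrB in cols; rewrite sumrB in rows.
rewrite innerZ sqZ rowsZ colsZ.
have taur := ler_wpM2l (ltW tau0) rows; have tauc := ler_wpM2l (ltW tau0) cols.
rewrite !mulrBr in taur tauc; nra.
Qed.

End Marginals.

Section Minimizer.
Variables (R : realType) (n : nat) (C X : 'M[R]_n) (tau eta : R) (a b : 'cV[R]_n).
Hypotheses (C0 : nonneg_mx C) (tau0 : 0 < tau) (eta0 : 0 <= eta).
Hypotheses (a0 : pos_vec a) (b0 : pos_vec b) (a1 : in_simplex a) (b1 : in_simplex b).
Hypothesis Xmin : is_minimizer_g C tau eta a b X.

Local Notation r := (row_sum X).
Local Notation c := (col_sum X).

Let X0 : nonneg_mx X := Xmin.1.

(* Compare [X] with [X + d *: delta_mx i j]; the entropy terms are controlled by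
   the convexity of [kl_term]. *)
Lemma minimizer_first_order i j d : 0 <= X i j + d -> 0 < r i + d -> 0 < c j + d ->
  0 <= d * (C i j + eta * (2 * X i j + d)
            + tau * ln ((r i + d) / a i 0) + tau * ln ((c j + d) / b j 0)).
Proof.
move=> Xd rd cd; pose Y := X + d *: delta_mx i j.
have YX k l : (k != i) || (l != j) -> Y k l = X k l.
  by rewrite !mxE -negb_and => /negbTE ->; rewrite mulr0 addr0.
have Yij : Y i j = X i j + d by rewrite !mxE !eqxx mulr1.
have rowY : row_sum Y i = r i + d.
  suff : row_sum Y i - r i = Y i j - X i j by rewrite Yij; lra.
  by rewrite (sumrB_agree_off (i := j)) // => l lj; rewrite YX // lj orbT.
have colY : col_sum Y j = c j + d.
  suff : col_sum Y j - c j = Y i j - X i j by rewrite Yij; lra.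
  by rewrite (sumrB_agree_off (i := i)) // => k ki; rewrite YX ?ki.
have Y0 : nonneg_mx Y.
  move=> k l; case: (boolP ((k != i) || (l != j))) => [/YX -> //|].
  by rewrite negb_or !negbK => /andP [/eqP -> /eqP ->]; rewrite Yij.
have := Xmin.2 Y Y0; rewrite -subr_ge0 (g_eta_subr_entry _ _ _ _ _ YX) Yij rowY colY.
have := kl_term_subr_le (a0 i) (row_sum_ge0 i X0) rd.
have := kl_term_subr_le (b0 j) (col_sum_ge0 j X0) cd.
rewrite !(addrAC _ d) !subrr !add0r => /(ler_wpM2l (ltW tau0)) hc /(ler_wpM2l (ltW tau0)) hr.
move=> /le_trans; apply; lra.
Qed.

Lemma minimizer_first_order_up i j s : 0 < s ->
  0 <= C i j + eta * (2 * X i j + s) + tau * ln ((r i + s) / a i 0) + tau * ln ((c j + s) / b j 0).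
Proof.
move=> s0; rewrite -(pmulr_rge0 _ s0); apply: minimizer_first_order.
- by have := X0 i j; lra.
- by have := row_sum_ge0 i X0; lra.
- by have := col_sum_ge0 j X0; lra.
Qed.

Lemma minimizer_first_order_down i j s : 0 < s -> s < X i j ->
  C i j + eta * (2 * X i j - s) + tau * ln ((r i - s) / a i 0) + tau * ln ((c j - s) / b j 0) <= 0.
Proof.
move=> s0 sX; rewrite -(pmulr_rle0 _ s0) -oppr_ge0 -mulNr; apply: minimizer_first_order.
- lra.
- by have := entry_le_row_sum i j X0; lra.
- by have := entry_le_col_sum i j X0; lra.
Qed.

Let n_gt0 : (0 < n)%N.
Proof.
have [i _] : exists i, 0 < a i 0 by apply: exists_gt0_of_sum; rewrite a1.2 ltr01.
exact: leq_ltn_trans (leq0n i) (ltn_ord i).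
Qed.

Lemma minimizer_row_sum_gt0 i : 0 < r i.
Proof.
pose j := Ordinal n_gt0.
apply: (gt0_of_lnD_lbound (K := C i j + eta * (2 * X i j + 1)) tau0 (a0 i) (b0 j)).
- exact: row_sum_ge0 _ X0.
- exact: col_sum_ge0 _ X0.
move=> s s0 s1; have := minimizer_first_order_up i j s0.
have : eta * s <= eta by rewrite ler_piMr.
lra.
Qed.

Lemma minimizer_col_sum_gt0 j : 0 < c j.
Proof.
pose i := Ordinal n_gt0.
apply: (gt0_of_lnD_lbound (K := C i j + eta * (2 * X i j + 1)) tau0 (b0 j) (a0 i)).
- exact: col_sum_ge0 _ X0.
- exact: row_sum_ge0 _ X0.
move=> s s0 s1; have := minimizer_first_order_up i j s0.
have : eta * s <= eta by rewrite ler_piMr.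
lra.
Qed.

Lemma minimizer_mass_le1 : \sum_i r i <= 1.
Proof.
have le_inv t : 0 < t -> t < 1 -> \sum_i r i <= t^-1.
  move=> t0 t1; have tX0 : nonneg_mx (t *: X) by move=> i j; rewrite mxE mulr_ge0 ?X0 ?ltW.
  have := g_eta_scale_le C eta tau0 t0 t1 a0 b0 a1 b1 X0.
  move: (Xmin.2 _ tX0); rewrite -subr_ge0 => /le_trans /[apply].
  rewrite nmulr_rge0 ?subr_lt0 // => mass; rewrite -subr_le0 -(pmulr_rle0 _ tau0).
  have : 0 <= frob_inner C X by do 2!apply: sumr_ge0 => ? _; apply: mulr_ge0.
  have : 0 <= eta * (t + 1) * frob_sq X.
    by rewrite !mulr_ge0 //; [lra | do 2!apply: sumr_ge0 => ? _; apply: sqr_ge0].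
  lra.
apply/ler_addgt0Pr => e e0; have := le_inv (1 + e)^-1; rewrite invrK; apply.
- by rewrite invr_gt0; lra.
- by rewrite invf_lt1; lra.
Qed.

Lemma minimizer_row_sum_le1 i : r i <= 1.
Proof.
apply: le_trans minimizer_mass_le1; apply: ler_sum_term => k; exact: row_sum_ge0.
Qed.

Lemma minimizer_col_mass_le1 : \sum_j c j <= 1.
Proof. by rewrite -sum_row_sum; exact: minimizer_mass_le1. Qed.

Variable Cmax : R.
Hypothesis CmaxP : forall i j, C i j <= Cmax.

Local Notation gamma := (Cmax + 2 * eta).
Local Notation u i := (ln (r i / a i 0)).
Local Notation v j := (ln (c j / b j 0)).

Lemma minimizer_ln_ratio_lbound i j : - gamma <= tau * (u i + v j).
Proof.
have Cg : C i j + eta * (2 * X i j) <= gamma.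
  have Xij1 := le_trans (entry_le_row_sum i j X0) (minimizer_row_sum_le1 i).
  have : eta * X i j <= eta by rewrite ler_piMr.
  by have := CmaxP i j; lra.
rewrite -subr_le0; apply: (le0_of_small_bound (K := eta + tau / r i + tau / c j) ltr01).
move=> s s0 _; have := minimizer_first_order_up i j s0.
have := ln_divDl_le (minimizer_row_sum_gt0 i) s0 (a0 i) => /(ler_wpM2l (ltW tau0)).
have := ln_divDl_le (minimizer_col_sum_gt0 j) s0 (b0 j) => /(ler_wpM2l (ltW tau0)).
lra.
Qed.

Lemma minimizer_ln_ratio_le0 i j : 0 < X i j -> u i + v j <= 0.
Proof.
move=> Xij0; rewrite -(pmulr_rle0 _ tau0).
apply: (le0_of_small_bound (K := eta + 2 * tau / r i + 2 * tau / c j) (d := X i j / 2)).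
  by rewrite divr_gt0.
move=> s s0 sX; have sX' : s < X i j by lra.
have := minimizer_first_order_down s0 sX'.
have sr : s <= r i / 2 by have := entry_le_row_sum i j X0; lra.
have sc : s <= c j / 2 by have := entry_le_col_sum i j X0; lra.
have := ln_divBl_ge s0 sr (a0 i) => /(ler_wpM2l (ltW tau0)).
have := ln_divBl_ge s0 sc (b0 j) => /(ler_wpM2l (ltW tau0)).
have : 0 <= eta * X i j by rewrite mulr_ge0 ?X0.
have := C0 i j; lra.
Qed.

Lemma minimizer_abs_ln_ratio_le i : `|u i| <= gamma / tau.
Proof.
have [i1 ri1] : exists i, r i <= a i 0.
  by apply: exists_ler_of_sum n_gt0 _; rewrite a1.2 minimizer_mass_le1.
have [j1 cj1] : exists j, c j <= b j 0.
  by apply: exists_ler_of_sum n_gt0 _; rewrite b1.2 minimizer_col_mass_le1.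
have [j Xij] : exists j, 0 < X i j by apply: exists_gt0_of_sum; exact: minimizer_row_sum_gt0.
have : tau * u i1 <= 0.
  by rewrite pmulr_rle0 // ln_le0 // ler_pdivrMr ?mul1r.
have : tau * v j1 <= 0.
  by rewrite pmulr_rle0 // ln_le0 // ler_pdivrMr ?mul1r.
have := minimizer_ln_ratio_lbound i j1; have := minimizer_ln_ratio_lbound i1 j.
have := minimizer_ln_ratio_le0 Xij; rewrite -(pmulr_rle0 _ tau0).
rewrite ler_norml -mulNr ler_pdivrMr // ler_pdivlMr // => *; apply/andP; split; lra.
Qed.

Lemma minimizer_l1_row_sums_le : l1 (X *m ones - a) <= n%:R * gamma / tau.
Proof.
rewrite -mulrA mulr_natl -[n in _ *+ n]card_ord -sumr_const.
apply: ler_sum => i _; rewrite mxE mul_ones_mxE mxE.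
apply: le_trans (minimizer_abs_ln_ratio_le i).
apply: abs_subr_le_abs_ln_div; rewrite ?minimizer_row_sum_gt0 ?minimizer_row_sum_le1 //.
by rewrite -a1.2; apply: (ler_sum_term (F := fun k => a k 0)) => k; exact: a1.1.
Qed.

End Minimizer.

Theorem mainTheorem12 (R : realType) (n : nat) (hn : (0 < n)%N)
  (C : 'M[R]_n) (hC : nonneg_mx C) (tau eta : R) (htau : 0 < tau) (heta : 0 < eta)
  (a b : 'cV[R]_n) (ha : in_simplex a) (hb : in_simplex b)
  (hapos : pos_vec a) (hbpos : pos_vec b)
  (X : 'M[R]_n) (hX : is_minimizer_g C tau eta a b X) :
  let gamma := mx_norm_inf C + 2 * eta in
  l1 (X *m ones - a) <= n%:R * gamma / tau /\
  l1 (X^T *m ones - b) <= n%:R * gamma / tau.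
Proof.
move=> gamma; rewrite {}/gamma.
have hCT : nonneg_mx C^T by move=> i j; rewrite mxE.
have hCTmax i j : C^T i j <= mx_norm_inf C by rewrite mxE ler_mx_norm_inf.
split.
- exact (minimizer_l1_row_sums_le hC htau (ltW heta) hapos hbpos ha hb hX
           (@ler_mx_norm_inf _ _ C)).
- exact (minimizer_l1_row_sums_le hCT htau (ltW heta) hbpos hapos hb ha
           (is_minimizer_g_tr hX) hCTmax).
Qed.
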